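(* Let $g:\mathbb{R}^n\setminus\{0\}\to\mathbb{R}^n$ denote the gradient $\nabla f$ of a function $f$, let $\tfrac14<\tau<1$ and $\epsilon>0$. Let $\mathbf{x}_0,\mathbf{x}_1,\mathbf{x}_2,\dots$ be nonzero vectors, and define $\mathbf{p}_0=\nabla f(\mathbf{x}_0)$ and, for $k\ge1$, $$\mathbf{p}_k=\nabla f(\mathbf{x}_k)+\beta_{k-1}\mathbf{d}_{k-1},\qquad \mathbf{d}_{k-1}=\mathbf{x}_k-\mathbf{x}_{k-1},\quad \mathbf{y}_{k-1}=\nabla f(\mathbf{x}_k)-\nabla f(\mathbf{x}_{k-1}),$$ where $\beta_{k-1}=\max(0,\tilde\beta_{k-1})$ with $$\tilde\beta_{k-1}=\begin{cases}\left(\tau\,\mathbf{d}_{k-1}\dfrac{\|\mathbf{y}_{k-1}\|^2}{\mathbf{d}_{k-1}^\top\mathbf{y}_{k-1}}-\mathbf{y}_{k-1}\right)^{\!\top}\dfrac{\nabla f(\mathbf{x}_k)}{\mathbf{d}_{k-1}^\top\mathbf{y}_{k-1}} & \text{if } |\mathbf{d}_{k-1}^\top\mathbf{y}_{k-1}|\ge\epsilon\|\mathbf{d}_{k-1}\|\|\mathbf{y}_{k-1}\| \text{ (and } \mathbf{d}_{k-1}^\top\mathbf{y}_{k-1}\neq0),\\ 0&\text{otherwise.}\end{cases}$$ Then for every $k\ge0$, $$\mathbf{p}_k^\top\nabla f(\mathbf{x}_k)\ge\Big(1-\frac{1}{4\tau}\Big)\|\nabla f(\mathbf{x}_k)\|^2,$$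 and there is a constant $M_0>1$, independent of $k$, such that $\|\mathbf{p}_k\|\le M_0\|\nabla f(\mathbf{x}_k)\|$ for all $k$.
   Context: $\|\cdot\|$ is the Euclidean norm. In the paper $f$ is the objective $f(\mathbf{x})=(r-1)!\,\mathcal{A}\mathbf{x}^r/\|\mathbf{x}\|_p^r$ of the $p$-spectral radius problem, but the statement only uses that $\nabla f$ is a vector-valued map. *)

From HB Require Import structures.
From mathcomp Require Import all_boot all_order all_algebra.
From mathcomp Require Import reals.
Set Implicit Arguments. Unset Strict Implicit. Unset Printing Implicit Defensive.
Import Order.TTheory GRing.Theory Num.Theory.
Local Open Scope ring_scope.

Definition dotv (R : realType) (n : nat) (u v : 'rV[R]_n) : R := (u *m v^T) 0 0.
Definition enorm (R : realType) (n : nat) (u : 'rV[R]_n) : R := Num.sqrt (dotv u u).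

Section CG.
Variables (R : realType) (n : nat).
Variables (g : 'rV[R]_n -> 'rV[R]_n) (tau eps : R) (x : nat -> 'rV[R]_n).

(* d_{k-1} = x_k - x_{k-1},  y_{k-1} = g(x_k) - g(x_{k-1}); we index by k-1 =: j *)
Definition dir (j : nat) : 'rV[R]_n := x j.+1 - x j.
Definition ydif (j : nat) : 'rV[R]_n := g (x j.+1) - g (x j).

Definition beta_tilde (j : nat) : R :=
  let d := dir j in let y := ydif j in let dy := dotv d y in
  if (dy != 0) && (eps * enorm d * enorm y <= `|dy|) then
    dotv (((tau * (enorm y ^+ 2 / dy)) *: d) - y) ((dy^-1) *: g (x j.+1))
  else 0.

Definition beta (j : nat) : R := Num.max 0 (beta_tilde j).

Definition pdir (k : nat) : 'rV[R]_n :=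
  match k with
  | 0 => g (x 0)
  | j.+1 => g (x j.+1) + beta j *: dir j
  end.
End CG.

(* Both estimates only use Cauchy-Schwarz and the safeguard
   [eps |d| |y| <= |d^T y|].  Writing [t = d^T G / d^T y], the extra term of
   [p^T G] is [beta_tilde * d^T G = tau |y|^2 t^2 - (y^T G) t], a quadratic in
   [|y| |t|] bounded below by [-|G|^2 / (4 tau)].  For the size of [p], the
   safeguard makes [r = |y| |d| / |d^T y|] at most [1/eps], and
   [|beta_tilde| |d| <= (tau r^2 + r) |G|]. *)
From HB Require Import structures.
From mathcomp Require Import all_boot all_order all_algebra.
From mathcomp Require Import reals.
From mathcomp Require Import ring lra.
Import Order.TTheory GRing.Theory Num.Theory.
Local Open Scope ring_scope.

Section InnerProduct.
Context {R : realType} {n : nat}.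
Implicit Types (u v w : 'rV[R]_n) (a : R).

Lemma dotvE u v : dotv u v = \sum_i u 0 i * v 0 i.
Proof. by rewrite /dotv mxE; apply: eq_bigr => i _; rewrite mxE. Qed.

Lemma dotvC u v : dotv u v = dotv v u.
Proof. by rewrite !dotvE; apply: eq_bigr => i _; rewrite mulrC. Qed.

Lemma dotvDl u v w : dotv (u + v) w = dotv u w + dotv v w.
Proof. by rewrite !dotvE -big_split; apply: eq_bigr => i _; rewrite mxE mulrDl. Qed.

Lemma dotvZl a u w : dotv (a *: u) w = a * dotv u w.
Proof. by rewrite !dotvE mulr_sumr; apply: eq_bigr => i _; rewrite mxE mulrA. Qed.

Lemma dotvNl u w : dotv (- u) w = - dotv u w.
Proof. by rewrite -scaleN1r dotvZl mulN1r. Qed.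

Lemma dotvDr u v w : dotv w (u + v) = dotv w u + dotv w v.
Proof. by rewrite dotvC dotvDl !(dotvC w). Qed.

Lemma dotvZr a u w : dotv w (a *: u) = a * dotv w u.
Proof. by rewrite dotvC dotvZl dotvC. Qed.

Lemma dotvNr u w : dotv w (- u) = - dotv w u.
Proof. by rewrite dotvC dotvNl dotvC. Qed.

Lemma dotv0r u : dotv u 0 = 0.
Proof. by rewrite -(scale0r (0 : 'rV[R]_n)) dotvZr mul0r. Qed.

Lemma dotvv_ge0 u : 0 <= dotv u u.
Proof. by rewrite dotvE; apply: sumr_ge0 => i _; rewrite -expr2 sqr_ge0. Qed.

Lemma dotvv_eq0 u : (dotv u u == 0) = (u == 0).
Proof.
apply/idP/eqP => [|->]; last by rewrite dotv0r.
rewrite dotvE psumr_eq0 => [/allP u0|i _]; last by rewrite -expr2 sqr_ge0.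
apply/rowP => i; rewrite mxE.
by have /implyP/(_ isT) := u0 i (mem_index_enum _); rewrite mulf_eq0 orbb => /eqP.
Qed.

Lemma enorm_ge0 u : 0 <= enorm u.
Proof. exact: sqrtr_ge0. Qed.

Lemma enorm_sqr u : enorm u ^+ 2 = dotv u u.
Proof. by rewrite sqr_sqrtr // dotvv_ge0. Qed.

Lemma enormZ a u : enorm (a *: u) = `|a| * enorm u.
Proof.
by rewrite /enorm dotvZl dotvZr mulrA -expr2 sqrtrM ?sqr_ge0 // sqrtr_sqr.
Qed.

(* Expand [0 <= |(v.v) u - (u.v) v|^2 = (v.v) ((u.u)(v.v) - (u.v)^2)]. *)
Lemma dotv_sqr_le u v : dotv u v ^+ 2 <= dotv u u * dotv v v.
Proof.
have [v0|v_neq0] := eqVneq v 0; first by rewrite v0 !dotv0r expr2 !mulr0.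
have vv_gt0 : 0 < dotv v v by rewrite lt_def dotvv_eq0 v_neq0 dotvv_ge0.
have := dotvv_ge0 (dotv v v *: u - dotv u v *: v).
have -> : dotv (dotv v v *: u - dotv u v *: v) (dotv v v *: u - dotv u v *: v)
   = dotv v v * (dotv u u * dotv v v - dotv u v ^+ 2).
  by rewrite !(dotvDl, dotvDr, dotvNl, dotvNr, dotvZl, dotvZr) (dotvC v u); ring.
by rewrite pmulr_rge0 // subr_ge0.
Qed.

Lemma normr_dotv_le u v : `|dotv u v| <= enorm u * enorm v.
Proof.
rewrite /enorm -sqrtrM ?dotvv_ge0 // -sqrtr_sqr.
exact/ler_wsqrtr/dotv_sqr_le.
Qed.

Lemma enormD u v : enorm (u + v) <= enorm u + enorm v.
Proof.
rewrite {1}/enorm -[enorm u + _]ger0_norm ?addr_ge0 ?enorm_ge0 // -sqrtr_sqr.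
apply: ler_wsqrtr; rewrite sqrrD !enorm_sqr dotvDl !dotvDr (dotvC v u).
have := normr_dotv_le u v; have := ler_norm (dotv u v); lra.
Qed.

End InnerProduct.

Lemma mul_sub_sqr_le {R : realFieldType} (a s : R) {tau : R} :
  0 < tau -> a * s - tau * s ^+ 2 <= a ^+ 2 / (4 * tau).
Proof.
move=> tau_gt0; rewrite -subr_ge0.
have -> : a ^+ 2 / (4 * tau) - (a * s - tau * s ^+ 2)
          = (a - 2 * tau * s) ^+ 2 / (4 * tau) by field; lra.
by rewrite divr_ge0 ?sqr_ge0 //; lra.
Qed.

Section SearchDirection.
Variables (R : realType) (n : nat).
Variables (g : 'rV[R]_n -> 'rV[R]_n) (tau eps : R) (x : nat -> 'rV[R]_n).
Hypotheses (tau_gt0 : 0 < tau) (eps_gt0 : 0 < eps).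

Local Notation d j := (dir x j).
Local Notation y j := (ydif g x j).
Local Notation G j := (g (x j.+1)).

Lemma beta_tilde_cases j :
  beta_tilde g tau eps x j = 0 \/
  [/\ dotv (d j) (y j) != 0,
       eps * enorm (d j) * enorm (y j) <= `|dotv (d j) (y j)|
     & beta_tilde g tau eps x j = (tau * enorm (y j) ^+ 2 * dotv (d j) (G j)
         / dotv (d j) (y j) - dotv (y j) (G j)) / dotv (d j) (y j)].
Proof.
rewrite /beta_tilde; case: ifP => [/andP[dy_neq0 safeguard]|_]; [right|by left].
split=> //.
by rewrite dotvZr (dotvDl (_ *: _)) (dotvNl (y j)) dotvZl; field.
Qed.

Lemma beta_tilde_dot_ge j :
  - (enorm (G j) ^+ 2 / (4 * tau)) <= beta_tilde g tau eps x j * dotv (d j) (G j).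
Proof.
case: (beta_tilde_cases j) => [->|[dy_neq0 _ ->]].
  by rewrite mul0r oppr_le0 divr_ge0 ?sqr_ge0 ?mulr_ge0 ?ltW.
set t := dotv (d j) (G j) / dotv (d j) (y j).
have -> : (tau * enorm (y j) ^+ 2 * dotv (d j) (G j) / dotv (d j) (y j)
    - dotv (y j) (G j)) / dotv (d j) (y j) * dotv (d j) (G j)
  = tau * (enorm (y j) * `|t|) ^+ 2 - dotv (y j) (G j) * t.
  by rewrite exprMn real_normK ?num_real // /t; field.
have yGt_le : dotv (y j) (G j) * t <= enorm (G j) * (enorm (y j) * `|t|).
  rewrite (le_trans (ler_norm _)) // normrM mulrA [_ * enorm _]mulrC.
  by rewrite ler_wpM2r ?normr_dotv_le.
have := mul_sub_sqr_le (enorm (G j)) (enorm (y j) * `|t|) tau_gt0; lra.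
Qed.

Lemma normr_beta_tilde_le j :
  `|beta_tilde g tau eps x j| * enorm (d j)
    <= (tau / eps ^+ 2 + eps^-1) * enorm (G j).
Proof.
have ieps_ge0 : 0 <= eps^-1 by rewrite invr_ge0 ltW.
have bound_ge0 : 0 <= (tau / eps ^+ 2 + eps^-1) * enorm (G j).
  by rewrite mulr_ge0 ?enorm_ge0 // addr_ge0 // divr_ge0 ?sqr_ge0 // ltW.
case: (beta_tilde_cases j) => [->|[dy_neq0 safeguard ->]].
  by rewrite normr0 mul0r.
set D := enorm (d j); set Y := enorm (y j); set N := enorm (G j).
set A := `|dotv (d j) (y j)|.
have A_gt0 : 0 < A by rewrite normr_gt0.
have D_ge0 : 0 <= D := enorm_ge0 _.
have Y_ge0 : 0 <= Y := enorm_ge0 _.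
have N_ge0 : 0 <= N := enorm_ge0 _.
set r := Y * D / A.
have r_ge0 : 0 <= r by rewrite /r divr_ge0 ?mulr_ge0 // ltW.
have r_le : r <= eps^-1.
  rewrite /r ler_pdivrMr // -(ler_pM2l eps_gt0) !mulrA mulfV ?gt_eqF // mul1r.
  by rewrite -mulrA [Y * D]mulrC mulrA.
have dG_le : `|dotv (d j) (G j)| <= D * N by apply: normr_dotv_le.
have yG_le : `|dotv (y j) (G j)| <= Y * N by apply: normr_dotv_le.
have iA_ge0 : 0 <= A^-1 by rewrite invr_ge0 ltW.
have curvature_le : `|tau * Y ^+ 2 * dotv (d j) (G j) / dotv (d j) (y j)
                      / dotv (d j) (y j)| * D <= tau * r ^+ 2 * N.
  rewrite !normrM !normfV -/A (ger0_norm (ltW tau_gt0)) !(ger0_norm Y_ge0) -expr2.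
  have -> : tau * r ^+ 2 * N = tau * Y ^+ 2 * (D * N) * A^-1 * A^-1 * D.
    by rewrite /r; field; rewrite gt_eqF.
  do 3!apply: ler_wpM2r => //.
  by apply: ler_wpM2l; rewrite // mulr_ge0 ?sqr_ge0 // ltW.
have gradient_le : `|dotv (y j) (G j) / dotv (d j) (y j)| * D <= r * N.
  rewrite normrM normfV -/A.
  have -> : r * N = Y * N * A^-1 * D by rewrite /r; field; rewrite gt_eqF.
  by do 2!apply: ler_wpM2r => //.
have r_sqr_le : r ^+ 2 <= eps^-1 ^+ 2 by rewrite ler_sqr ?nnegrE.
rewrite mulrBl (le_trans (ler_wpM2r D_ge0 (ler_normB _ _))) // mulrDl.
rewrite (le_trans (lerD curvature_le gradient_le)) // -exprVn.
have := ler_wpM2l (ltW tau_gt0) r_sqr_le; have := N_ge0; nra.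
Qed.

Lemma beta_dot_ge j :
  - (enorm (G j) ^+ 2 / (4 * tau)) <= beta g tau eps x j * dotv (d j) (G j).
Proof.
rewrite /beta maxEle; case: ifP => _; first exact: beta_tilde_dot_ge.
by rewrite mul0r oppr_le0 divr_ge0 ?sqr_ge0 ?mulr_ge0 ?ltW.
Qed.

Lemma normr_beta_le j :
  `|beta g tau eps x j| * enorm (d j) <= (tau / eps ^+ 2 + eps^-1) * enorm (G j).
Proof.
apply: le_trans (normr_beta_tilde_le j); apply: ler_wpM2r; first exact: enorm_ge0.
by rewrite ger0_norm ?le_max ?lexx // ge_max normr_ge0 ler_norm.
Qed.

Lemma pdir_dot_ge k :
  (1 - (4 * tau)^-1) * enorm (g (x k)) ^+ 2 <= dotv (pdir g tau eps x k) (g (x k)).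
Proof.
rewrite mulrBl mul1r mulrC; case: k => [|j] /=.
  by rewrite -enorm_sqr gerBl divr_ge0 ?sqr_ge0 ?mulr_ge0 ?ltW.
by rewrite dotvDl dotvZl -enorm_sqr lerD2l beta_dot_ge.
Qed.

Lemma enorm_pdir_le k :
  enorm (pdir g tau eps x k) <= (1 + tau / eps ^+ 2 + eps^-1) * enorm (g (x k)).
Proof.
rewrite -addrA mulrDl mul1r; case: k => [|j] /=.
  by rewrite lerDl mulr_ge0 ?enorm_ge0 ?addr_ge0 ?invr_ge0 ?divr_ge0 ?sqr_ge0 ?ltW.
rewrite (le_trans (enormD _ _)) // lerD2l enormZ; exact: normr_beta_le.
Qed.

End SearchDirection.

Theorem lemma3p3 (R : realType) (n : nat) (g : 'rV[R]_n -> 'rV[R]_n)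
  (tau eps : R) (x : nat -> 'rV[R]_n) :
  4^-1 < tau -> tau < 1 -> 0 < eps ->
  (forall k, x k != 0) ->
  (forall k, (1 - (4 * tau)^-1) * enorm (g (x k)) ^+ 2
               <= dotv (pdir g tau eps x k) (g (x k)))
  /\ (exists M0 : R, 1 < M0 /\
        forall k, enorm (pdir g tau eps x k) <= M0 * enorm (g (x k))).
Proof.
move=> tau_gt_quarter _ eps_gt0 _.
have tau_gt0 : 0 < tau by apply: lt_trans tau_gt_quarter; rewrite invr_gt0.
split=> [k|]; first exact: pdir_dot_ge.
exists (1 + tau / eps ^+ 2 + eps^-1); split=> [|k]; last exact: enorm_pdir_le.
by rewrite -addrA ltrDl ltr_wpDl ?invr_gt0 // divr_ge0 ?sqr_ge0 ?ltW.
Qed.
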